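(* Every SSSCG with weakly monotonic cost functions admits an OSE $(\sigma_\ell,\nu)$ in which $\sigma_\ell$ is pure.
   Context: A symmetric Stackelberg singleton congestion game (SSSCG) consists of a leader $\ell$, a finite set $F$ of followers, a finite set $R$ of resources which every player may select (each player selects exactly one), and cost functions $c_{i,\ell},c_{i,f}:\mathbb N\to\mathbb Q$ ($i\in R$) for the leader and the followers with $c_{i,\ell}(0)=c_{i,f}(0)=0$. The leader commits to a probability distribution $\sigma_\ell$ on $R$ (pure if it puts probability $1$ on one resource). A followers' configuration is $\nu\in\mathbb N^R$ with $\sum_i\nu_i=|F|$. The followers' expected cost of resource $i$ with $x$ followers is $c^{\sigma_\ell}_{i,f}(x)=\sigma_\ell(i)c_{i,f}(x+1)+(1-\sigma_\ell(i))c_{i,f}(x)$; the leader's cost is $c_\ell^{(\sigma_\ell,\nu)}=\sum_{i\in R}\sigma_\ell(i)c_{i,\ell}(\nu_i+1)$. $\nu$ is a Nash equilibrium for $\sigma_\ell$ ($\nu\in E^{\sigma_\ell}$) if for all $i$ with $\nu_i>0$ and all $j\ne i$, $c^{\sigma_\ell}_{i,f}(\nu_i)\le c^{\sigma_\ell}_{j,f}(\nu_j+1)$. An optimistic Stackelberg equilibrium (OSE) is a pair $(\sigma_\ell,\nu)$ with $\nu\in E^{\sigma_\ell}$ minimizing $c_\ell^{(\sigma_\ell,\nu)}$ over all such pairs. Weakly monotonic: $c_{i,\ell}(x)\le c_{i,\ell}(x+1)$, $c_{i,f}(x)\le c_{i,f}(x+1)$ for all $i,x$. *)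

From HB Require Import structures.
From mathcomp Require Import all_boot all_order all_algebra.
Set Implicit Arguments. Unset Strict Implicit. Unset Printing Implicit Defensive.
Import Order.TTheory GRing.Theory Num.Theory.
Local Open Scope ring_scope.

(* Resources: a finType [Res]; followers: a finType [F] (only #|F| matters).
   Probabilities of the leader's mixed strategy live in an ordered field [K]
   (e.g. the reals); rational costs are embedded with [ratr]. *)

Section SSSCG.
Variables (K : realFieldType) (Res F : finType).
Variables (cl cf : Res -> nat -> rat).

Definition is_distr (sigma : Res -> K) : Prop :=
  (forall i, 0 <= sigma i) /\ \sum_(i : Res) sigma i = 1.

Definition is_pure (sigma : Res -> K) : Prop := exists i, sigma i = 1.

Definition is_config (nu : Res -> nat) : Prop :=
  (\sum_(i : Res) nu i)%N = #|F|.

Definition fcost (sigma : Res -> K) (i : Res) (x : nat) : K :=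
  sigma i * ratr (cf i x.+1) + (1 - sigma i) * ratr (cf i x).

Definition lcost (sigma : Res -> K) (nu : Res -> nat) : K :=
  \sum_(i : Res) sigma i * ratr (cl i (nu i).+1).

Definition is_NE (sigma : Res -> K) (nu : Res -> nat) : Prop :=
  forall i j, (0 < nu i)%N -> i != j ->
    fcost sigma i (nu i) <= fcost sigma j (nu j).+1.

Definition is_OSE (sigma : Res -> K) (nu : Res -> nat) : Prop :=
  [/\ is_distr sigma, is_config nu, is_NE sigma nu &
      forall sigma' nu', is_distr sigma' -> is_config nu' -> is_NE sigma' nu' ->
        lcost sigma nu <= lcost sigma' nu'].

End SSSCG.

Definition weakly_monotonic (Res : finType) (cl cf : Res -> nat -> rat) : Prop :=
  forall i x, (cl i x <= cl i x.+1)%R /\ (cf i x <= cf i x.+1)%R.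

(* Fix a feasible pair (sigma, nu) and a resource i in the support of sigma
   minimising the leader's cost c_{i,l}(nu_i + 1); the leader pays at least that.
   If the leader commits to i purely, the followers play a singleton congestion
   game with nondecreasing costs in which, thanks to the equilibrium conditions
   for sigma and monotonicity, no follower outside i would gain by joining i
   under nu.  Minimising Rosenthal's potential among the configurations with at
   most nu_i followers on i yields an equilibrium for the pure commitment with
   no more followers on i, hence no larger leader cost.  So pure commitments
   are as good as mixed ones, and a best pure pair (a finite search) is an OSE. *)
From HB Require Import structures.
From mathcomp Require Import all_boot all_order all_algebra.
From mathcomp Require Import zify ring lra.
Import Order.TTheory GRing.Theory Num.Theory.
Local Open Scope ring_scope.
Set Implicit Arguments. Unset Strict Implicit.

Lemma bigD2 (R : Type) (idx : R) (op : Monoid.com_law idx) (I : finType)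
    (F : I -> R) j k : j != k ->
  \big[op/idx]_l F l =
    op (op (F j) (F k)) (\big[op/idx]_(l | (l != j) && (l != k)) F l).
Proof.
move=> neq_jk; rewrite (bigD1 j) // (bigD1 k) /=; last by rewrite eq_sym.
by rewrite Monoid.mulmA.
Qed.

Lemma exists_lt_of_sum_eq (I : finType) (mu nu : I -> nat) j :
  (\sum_l mu l = \sum_l nu l)%N -> (nu j < mu j)%N ->
  exists2 l, l != j & (mu l < nu l)%N.
Proof.
move=> eq_sum lt_j.
case: (pickP (fun l => (l != j) && (mu l < nu l)%N)) => [l /andP[] | none].
  by exists l.
have : (\sum_(l | l != j) nu l <= \sum_(l | l != j) mu l)%N.
  apply: leq_sum => l neq_lj; rewrite leqNgt.
  by move: (none l); rewrite neq_lj => /= ->.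
by rewrite (bigD1 j) // (bigD1 j (F := nu)) //= in eq_sum; lia.
Qed.

Section FiniteConfigurations.
Variables (K : realFieldType) (Res : finType).

(* Configurations of n players are encoded as [{ffun Res -> 'I_n.+1}], hence
   range over a finite type; the extensionality hypotheses transfer
   properties back from the decoded functions. *)
Lemma exists_min_config (I : finType) (n : nat)
    (Q : I -> (Res -> nat) -> bool) (phi : I -> (Res -> nat) -> K) i0 mu0 :
  (forall i mu mu', mu =1 mu' -> Q i mu = Q i mu') ->
  (forall i mu mu', mu =1 mu' -> phi i mu = phi i mu') ->
  (\sum_j mu0 j)%N = n -> Q i0 mu0 ->
  exists i mu, [/\ (\sum_j mu j)%N = n, Q i mu &
    forall i' mu', (\sum_j mu' j)%N = n -> Q i' mu' -> phi i mu <= phi i' mu'].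
Proof.
move=> Qext phiext sum_mu0 Q_mu0.
pose enc (mu : Res -> nat) : {ffun Res -> 'I_n.+1} := [ffun j => inord (mu j)].
pose dec (f : {ffun Res -> 'I_n.+1}) j := (f j : nat).
have encK mu : (\sum_j mu j)%N = n -> dec (enc mu) =1 mu.
  move=> sum_mu j; rewrite /dec ffunE inordK // ltnS -sum_mu.
  by rewrite (bigD1 j) //= leq_addr.
pose P (p : I * {ffun Res -> 'I_n.+1}) :=
  ((\sum_j dec p.2 j)%N == n) && Q p.1 (dec p.2).
have P_enc i mu : (\sum_j mu j)%N = n -> Q i mu -> P (i, enc mu).
  move=> sum_mu Q_mu; rewrite /P /= (Qext _ _ _ (encK _ sum_mu)) Q_mu andbT.
  by rewrite (eq_bigr _ (fun j _ => encK _ sum_mu j)) sum_mu.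
case: (arg_minP (fun p => phi p.1 (dec p.2)) (P_enc _ _ sum_mu0 Q_mu0)).
move=> [i f] /andP[/eqP sum_f Q_f] min_f.
exists i, (dec f); split=> // i' mu' sum_mu' Q_mu'.
by rewrite -(phiext _ _ _ (encK _ sum_mu')); apply: min_f (P_enc _ _ _ _).
Qed.

End FiniteConfigurations.

Section SingletonCongestionGame.
Variables (K : realFieldType) (Res : finType) (d : Res -> nat -> K).
Hypothesis d_mono : forall j x, d j x <= d j x.+1.

Lemma d_homo j : {homo d j : x y / (x <= y)%N >-> x <= y}.
Proof.
by apply: homo_leq => [x|y x z|x]; [exact: lexx | exact: le_trans | exact: d_mono].
Qed.

Definition equilibrium (nu : Res -> nat) : bool :=
  [forall j, [forall k, (0 < nu j)%N ==> (j != k) ==> (d j (nu j) <= d k (nu k).+1)]].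

Lemma equilibriumP nu :
  reflect (forall j k, (0 < nu j)%N -> j != k -> d j (nu j) <= d k (nu k).+1)
          (equilibrium nu).
Proof.
apply: (iffP forallP) => [eq_nu j k pos_j neq_jk | eq_nu j].
  by move/forallP: (eq_nu j) => /(_ k); rewrite pos_j neq_jk.
by apply/forallP => k; apply/implyP => pos_j; apply/implyP; apply: eq_nu.
Qed.

Lemma eq_equilibrium mu mu' : mu =1 mu' -> equilibrium mu = equilibrium mu'.
Proof.
move=> e; apply/equilibriumP/equilibriumP => eq_mu j k.
  by rewrite -!e; exact: eq_mu.
by rewrite !e; exact: eq_mu.
Qed.

Definition potential (nu : Res -> nat) : K := \sum_j \sum_(x < nu j) d j x.+1.

Lemma eq_potential mu mu' : mu =1 mu' -> potential mu = potential mu'.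
Proof. by move=> e; apply: eq_bigr => j _; rewrite e. Qed.

Definition move_player (j k : Res) (nu : Res -> nat) (l : Res) : nat :=
  if l == j then (nu j).-1 else if l == k then (nu k).+1 else nu l.

Lemma move_player_rest j k nu l :
  (l != j) && (l != k) -> move_player j k nu l = nu l.
Proof.
by case/andP=> /negbTE ne_lj /negbTE ne_lk; rewrite /move_player ne_lj ne_lk.
Qed.

Lemma move_player_src j k nu : move_player j k nu j = (nu j).-1.
Proof. by rewrite /move_player eqxx. Qed.

Lemma move_player_dst j k nu : j != k -> move_player j k nu k = (nu k).+1.
Proof. by move=> neq_jk; rewrite /move_player eq_sym (negbTE neq_jk) eqxx. Qed.

Lemma sum_move_player j k nu : (0 < nu j)%N -> j != k ->
  (\sum_l move_player j k nu l = \sum_l nu l)%N.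
Proof.
move=> pos_j neq_jk.
rewrite !(bigD2 _ _ neq_jk) (eq_bigr _ (@move_player_rest j k nu)).
rewrite move_player_src move_player_dst //.
by case: (nu j) pos_j => //= m _; rewrite addSn addnS.
Qed.

Lemma potential_move_player j k nu : (0 < nu j)%N -> j != k ->
  potential (move_player j k nu) + d j (nu j) = potential nu + d k (nu k).+1.
Proof.
move=> pos_j neq_jk; rewrite /potential !(bigD2 _ _ neq_jk).
rewrite (eq_bigr (fun l => \sum_(x < nu l) d l x.+1)); last first.
  by move=> l /(move_player_rest nu) ->.
rewrite move_player_src move_player_dst // big_ord_recr /=.
case: (nu j) pos_j => // m _; rewrite big_ord_recr /=; ring.
Qed.

Lemma no_gain_of_potential_le j k nu : (0 < nu j)%N -> j != k ->
  potential nu <= potential (move_player j k nu) -> d j (nu j) <= d k (nu k).+1.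
Proof.
move=> pos_j neq_jk pot_le.
by rewrite -(lerD2l (potential nu)) -(potential_move_player pos_j neq_jk) lerD2r.
Qed.

(* The cap on resource [i] is harmless: a follower blocked by it at [k = i]
   is either no worse off than in [nu'], or could have moved to a resource
   [l] that is below its level in [nu'].  *)
Lemma exists_equilibrium_below n i (nu' : Res -> nat) :
  (\sum_j nu' j)%N = n ->
  (forall j, j != i -> (0 < nu' j)%N -> d j (nu' j) <= d i (nu' i).+1) ->
  exists nu, [/\ (\sum_j nu j)%N = n, (nu i <= nu' i)%N & equilibrium nu].
Proof.
move=> sum_nu' nu'_i_best.
have [_ [nu [sum_nu cap_nu min_nu]]] :=
  @exists_min_config K Res unit n (fun _ mu => (mu i <= nu' i)%N)
    (fun _ mu => potential mu) tt nu'
    (fun _ _ _ e => congr1 (leq^~ _) (e i)) (fun _ _ _ => @eq_potential _ _)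
    sum_nu' (leqnn _).
have stable j k : (0 < nu j)%N -> j != k -> (k != i) || (nu i < nu' i)%N ->
    d j (nu j) <= d k (nu k).+1.
  move=> pos_j neq_jk cap_ok; apply: no_gain_of_potential_le => //.
  apply: (min_nu tt); first by rewrite sum_move_player.
  rewrite /move_player; case: ifP => [/eqP <- | _].
    exact: leq_trans (leq_pred _) cap_nu.
  by case: ifP => [/eqP eq_ik | _ //]; move: cap_ok; rewrite eq_ik eqxx.
exists nu; split=> //; apply/equilibriumP => j k pos_j neq_jk.
have [|/norP[/negbNE/eqP eq_ki]] := boolP ((k != i) || (nu i < nu' i)%N).
  exact: stable.
rewrite -leqNgt => ge_i.
have {ge_i}eq_i : nu i = nu' i by apply/eqP; rewrite eqn_leq cap_nu.
subst k; have [le_j | lt_j] := leqP (nu j) (nu' j).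
  apply: le_trans (d_homo j le_j) _.
  by rewrite eq_i nu'_i_best // (leq_trans pos_j).
have [l neq_lj lt_l] := exists_lt_of_sum_eq (etrans sum_nu (esym sum_nu')) lt_j.
have neq_li : l != i by apply: contraTneq lt_l => ->; rewrite eq_i ltnn.
apply: le_trans (stable j l pos_j _ _) _; [by rewrite eq_sym | by rewrite neq_li |].
apply: le_trans (d_homo l lt_l) _.
by rewrite eq_i nu'_i_best // (leq_ltn_trans _ lt_l).
Qed.

Lemma exists_equilibrium n : (0 < #|Res|)%N ->
  exists nu, (\sum_j nu j)%N = n /\ equilibrium nu.
Proof.
case/card_gt0P=> i _; pose nu' j := if j == i then n else 0%N.
have sum_nu' : (\sum_j nu' j)%N = n.
  by rewrite (bigD1 i) //= big1 /nu' ?eqxx ?addn0 // => j /negbTE ->.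
have [|nu [sum_nu _ eq_nu]] := @exists_equilibrium_below n i nu' sum_nu'.
  by move=> j /negbTE; rewrite /nu' => ->.
by exists nu.
Qed.

End SingletonCongestionGame.

Lemma distr_le1 (K : realFieldType) (Res : finType) (s : Res -> K) i :
  is_distr s -> s i <= 1.
Proof.
by case=> s_ge0 <-; rewrite (bigD1 i) //= lerDl sumr_ge0.
Qed.

Lemma exists_support_le_mean (K : realFieldType) (Res : finType) (s v : Res -> K) :
  is_distr s -> exists2 i, 0 < s i & v i <= \sum_j s j * v j.
Proof.
move=> [s_ge0 sum_s].
case: (pickP (fun i => 0 < s i)) => [i0 pos_i0 | s_le0]; last first.
  suff : \sum_j s j = 0 by rewrite sum_s => /eqP; rewrite oner_eq0.
  by apply: big1 => j _; apply/eqP; rewrite eq_le s_ge0 andbT leNgt s_le0.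
case: (@arg_minP _ _ _ i0 (fun i => 0 < s i) v pos_i0) => i pos_i min_i.
exists i => //.
rewrite -[v i]mul1r -sum_s mulr_suml; apply: ler_sum => j _.
have [pos_j | ] := boolP (0 < s j).
  by apply: ler_wpM2l; [exact: ltW | exact: min_i].
by rewrite lt0r s_ge0 andbT negbK => /eqP ->; rewrite !mul0r.
Qed.

Section PureCommitments.
Variables (K : realFieldType) (Res : finType) (cl cf : Res -> nat -> rat).
Hypothesis mono : weakly_monotonic cl cf.

Definition pure (i : Res) : Res -> K := fun j => (j == i)%:R.

Definition pure_cost (i j : Res) (x : nat) : K := ratr (cf j (x + (j == i))).

Lemma is_distr_pure i : is_distr (pure i).
Proof.
split=> [j | ]; first exact: ler0n.
by rewrite (bigD1 i) //= big1 /pure ?eqxx ?addr0 // => j /negbTE ->.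
Qed.

Lemma fcost_pure i j x : fcost cf (pure i) j x = pure_cost i j x.
Proof.
rewrite /fcost /pure /pure_cost; case: (j == i).
  by rewrite addn1 mul1r subrr mul0r addr0.
by rewrite addn0 mul0r add0r subr0 mul1r.
Qed.

Lemma lcost_pure i nu : lcost cl (pure i) nu = ratr (cl i (nu i).+1).
Proof.
rewrite /lcost (bigD1 i) //= big1 /pure ?eqxx ?mul1r ?addr0 //.
by move=> j /negbTE ->; rewrite mul0r.
Qed.

Lemma is_NE_pure i nu : is_NE cf (pure i) nu <-> equilibrium (pure_cost i) nu.
Proof.
split=> [NE_nu | /equilibriumP eq_nu j k pos_j neq_jk].
  by apply/equilibriumP => j k pos_j neq_jk; rewrite -!fcost_pure NE_nu.
by rewrite !fcost_pure eq_nu.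
Qed.

Lemma pure_cost_mono i j x : pure_cost i j x <= pure_cost i j x.+1.
Proof. by rewrite ler_rat addSn; apply: (mono _ _).2. Qed.

Lemma leader_cost_homo i :
  {homo (fun x => ratr (cl i x) : K) : x y / (x <= y)%N >-> x <= y}.
Proof.
apply: homo_leq => [x|y x z|x]; [exact: lexx | exact: le_trans |].
by rewrite ler_rat; apply: (mono _ _).1.
Qed.

Lemma fcost_between (s : Res -> K) j x : 0 <= s j <= 1 ->
  ratr (cf j x) <= fcost cf s j x <= ratr (cf j x.+1).
Proof.
case/andP=> s_ge0 s_le1; have := (mono j x).2; rewrite -(ler_rat K) /fcost.
set a := ratr (cf j x); set b := ratr _ => le_ab.
by apply/andP; split; nra.
Qed.

Lemma pure_cost_le_of_NE (s : Res -> K) nu i :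
  is_distr s -> is_NE cf s nu ->
  forall j, j != i -> (0 < nu j)%N -> pure_cost i j (nu j) <= pure_cost i i (nu i).+1.
Proof.
move=> distr_s NE_nu j neq_ji pos_j.
have s01 l : 0 <= s l <= 1 by rewrite distr_s.1 distr_le1.
have /andP[cost_j _] := fcost_between (nu j) (s01 j).
have /andP[_ cost_i] := fcost_between (nu i).+1 (s01 i).
rewrite /pure_cost (negbTE neq_ji) eqxx addn0 addn1.
exact: le_trans cost_j (le_trans (NE_nu j i pos_j neq_ji) cost_i).
Qed.

Lemma exists_pure_improvement (F : finType) (s : Res -> K) nu :
  is_distr s -> is_config F nu -> is_NE cf s nu ->
  exists i mu, [/\ is_config F mu, is_NE cf (pure i) mu &
                   lcost cl (pure i) mu <= lcost cl s nu].
Proof.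
move=> distr_s conf_nu NE_nu.
have [i _ le_mean] :=
  exists_support_le_mean (fun j => ratr (cl j (nu j).+1)) distr_s.
have [mu [conf_mu cap_mu eq_mu]] :=
  exists_equilibrium_below (@pure_cost_mono i) conf_nu
    (pure_cost_le_of_NE distr_s NE_nu).
exists i, mu; split=> //; first exact/is_NE_pure.
by rewrite lcost_pure (le_trans _ le_mean) // leader_cost_homo.
Qed.

End PureCommitments.

Theorem theorem7 (K : realFieldType) (Res F : finType)
    (cl cf : Res -> nat -> rat)
    (hRes : (0 < #|Res|)%N)
    (hcl0 : forall i, cl i 0%N = 0) (hcf0 : forall i, cf i 0%N = 0)
    (hmono : weakly_monotonic cl cf) :
  exists (sigma : Res -> K) (nu : Res -> nat),
    is_OSE F cl cf sigma nu /\ is_pure sigma.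
Proof.
case/card_gt0P: (hRes) => i0 _.
have [nu0 [conf_nu0 eq_nu0]] :=
  exists_equilibrium (@pure_cost_mono K _ _ _ hmono i0) #|F| hRes.
have [i [nu [conf_nu eq_nu min_nu]]] :=
  exists_min_config (Q := fun i => equilibrium (pure_cost K cf i))
    (phi := fun i mu => ratr (cl i (mu i).+1) : K)
    (fun _ _ _ => @eq_equilibrium _ _ _ _ _)
    (fun i _ _ e => congr1 (fun x => ratr (cl i x.+1)) (e i)) conf_nu0 eq_nu0.
exists (pure K i), nu; split; last by exists i; rewrite /pure eqxx.
split=> //; [exact: is_distr_pure | exact/is_NE_pure |].
move=> s' nu' distr_s' conf_nu' NE_nu'.
have [i' [mu [conf_mu NE_mu le_mu]]] :=
  exists_pure_improvement hmono distr_s' conf_nu' NE_nu'.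
apply: le_trans le_mu; rewrite !lcost_pure.
by apply: min_nu => //; apply/is_NE_pure.
Qed.
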